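(* Let $k$ be a commutative ring and $H$ a Hopf algebra over $k$ that is finitely generated projective as a $k$-module. If $H$ is a separable $k$-algebra, then $H$ is an FH-algebra.
   Context: $H$ is an FH-algebra if it is a Frobenius $k$-algebra admitting a Frobenius homomorphism $H\to k$ that is a left integral in $H^*$, i.e. lies in $\int^\ell_{H^*}=\{f\in H^*: gf=g(1_H)f\ \forall g\in H^*\}$ (product in $H^*$ is convolution). *)

From HB Require Import structures.
From mathcomp Require Import all_boot all_algebra.
Set Implicit Arguments. Unset Strict Implicit. Unset Printing Implicit Defensive.
Import GRing.Theory.
Local Open Scope ring_scope.

Section Defs.
Variables (k : comNzRingType) (H : algType k).

(* An element of H (x) H is represented by a finite list of pure tensors
   [seq (a_i, b_i)] (standing for sum_i a_i (x) b_i).  Since H is f.g.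
   projective, such an element is determined by its pairings with all
   f (x) g, f g : H^*. *)
Definition pair2 (f g : H -> k) (s : seq (H * H)) : k :=
  \sum_(p <- s) f p.1 * g p.2.

Definition fin_gen : Prop :=
  exists s : seq H, forall x : H,
    exists c : 'I_(size s) -> k, x = \sum_(i < size s) c i *: s`_i.

Definition projective_mod : Prop :=
  forall (M N : lmodType k) (pi : {linear M -> N}) (f : {linear H -> N}),
    (forall n : N, exists m : M, pi m = n) ->
    exists g : {linear H -> M}, forall x : H, pi (g x) = f x.

Definition fgp : Prop := fin_gen /\ projective_mod.

Definition is_hopf (comul : H -> seq (H * H)) (counit : {scalar H})
    (antipode : {linear H -> H}) : Prop :=
  [/\
      forall (f g : {scalar H}) (a : k) (x y : H),
        pair2 f g (comul (a *: x + y)) = a * pair2 f g (comul x) + pair2 f g (comul y),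
      forall (f g l : {scalar H}) (x : H),
        \sum_(p <- comul x) pair2 f g (comul p.1) * l p.2
        = \sum_(p <- comul x) f p.1 * pair2 g l (comul p.2),
      forall x : H, \sum_(p <- comul x) counit p.1 *: p.2 = x
                 /\ \sum_(p <- comul x) counit p.2 *: p.1 = x,
      (forall (f g : {scalar H}) (x y : H),
         pair2 f g (comul (x * y))
         = \sum_(p <- comul x) \sum_(q <- comul y) f (p.1 * q.1) * g (p.2 * q.2))
      /\ (forall f g : {scalar H}, pair2 f g (comul 1) = f 1 * g 1)
      /\ (forall x y : H, counit (x * y) = counit x * counit y) /\ counit 1 = 1
    &
      forall x : H, \sum_(p <- comul x) antipode p.1 * p.2 = counit x *: 1
                 /\ \sum_(p <- comul x) p.1 * antipode p.2 = counit x *: 1].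

Definition separable_alg : Prop :=
  exists e : seq (H * H),
    \sum_(p <- e) p.1 * p.2 = 1 /\
    forall (a : H) (f g : {scalar H}),
      pair2 f g [seq (a * p.1, p.2) | p <- e] = pair2 f g [seq (p.1, p.2 * a) | p <- e].

Definition frobenius_hom (phi : {scalar H}) : Prop :=
  (forall x x' : H, (forall y, phi (x * y) = phi (x' * y)) -> x = x') /\
  (forall g : {scalar H}, exists x : H, forall y, phi (x * y) = g y).

Definition frobenius_alg : Prop := fgp /\ exists phi, frobenius_hom phi.

(* Left integral in H^* for the convolution product (g f)(h) = sum g(h1) f(h2). *)
Definition left_integral (comul : H -> seq (H * H)) (f : {scalar H}) : Prop :=
  forall (g : {scalar H}) (h : H),
    \sum_(p <- comul h) g p.1 * f p.2 = g 1 * f h.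

Definition FH_alg (comul : H -> seq (H * H)) : Prop :=
  frobenius_alg /\ exists phi, frobenius_hom phi /\ left_integral comul phi.

End Defs.

From HB Require Import structures.
From mathcomp Require Import all_boot all_algebra.
From mathcomp Require Import ring.
Set Implicit Arguments. Unset Strict Implicit. Unset Printing Implicit Defensive.
Import GRing.Theory.
Local Open Scope ring_scope.

(* A separability idempotent [e = sum x_i (x) y_i] of H gives a normalized two-sided
   integral [t = sum eps(y_i) x_i], i.e. [a t = t a = eps(a) t] and [eps(t) = 1].
   Take a dual basis [(b_i, c_i)] of the f.g. projective module H.  The Larson--Radford
   trace [lambda(x) = sum_i c_i(x S^2(b_i))] is a left integral in H^*, which follows by
   Sweedler calculus from the fact that S is an anti-coalgebra map, and [lambda(t) = 1].
   Then [g |-> sum g(S t_1) t_2] inverts [x |-> lambda(x _)], and the coordinate forms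
   satisfy [c_i = lambda(_ u_i)] for suitable [u_i], so lambda is a Frobenius
   homomorphism. *)

Section Sweedler.
Variables (k : comNzRingType) (H : algType k).

Definition as_scalar (phi : H -> k) (phiP : scalar phi) : {scalar H} :=
  HB.pack phi (GRing.isLinear.Build k H k *%R phi phiP).

Lemma scalar_fun_sum (phi : H -> k) I (r : seq I) (F : I -> H) : scalar phi ->
  phi (\sum_(i <- r) F i) = \sum_(i <- r) phi (F i).
Proof. by move=> phiP; exact: (linear_sum (as_scalar phiP)). Qed.

Lemma scalar_funZ (phi : H -> k) a u : scalar phi -> phi (a *: u) = a * phi u.
Proof. by move=> phiP; exact: (scalarZ (as_scalar phiP)). Qed.

Lemma scalar_mulr (phi : H -> k) x : scalar phi -> scalar (fun w => phi w * x).
Proof. by move=> phiP a u v; rewrite phiP mulrDl mulrA. Qed.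

Lemma scalar_mull (phi : H -> k) x : scalar phi -> scalar (fun w => x * phi w).
Proof. by move=> phiP a u v; rewrite phiP mulrDr !mulrA [x * a]mulrC. Qed.

Lemma scalar_comp (phi : H -> k) (T : H -> H) :
  scalar phi -> linear T -> scalar (fun w => phi (T w)).
Proof. by move=> phiP TP a u v; rewrite TP phiP. Qed.

Lemma scalar_bigsum I (r : seq I) (G : H -> I -> k) :
  (forall i, scalar (G^~ i)) -> scalar (fun w => \sum_(i <- r) G w i).
Proof.
by move=> GP a u v; rewrite mulr_sumr -big_split; apply: eq_bigr => i _; apply: GP.
Qed.

Lemma exchange_big_rot3 I J K (r1 : seq I) (r2 : seq J) (r3 : seq K) (F : I -> J -> K -> k) :
  \sum_(i <- r1) \sum_(j <- r2) \sum_(l <- r3) F i j l =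
  \sum_(j <- r2) \sum_(l <- r3) \sum_(i <- r1) F i j l.
Proof. by rewrite exchange_big; apply: eq_bigr => j _; rewrite exchange_big. Qed.

Lemma exchange_big_rot4 I J K L (r1 : seq I) (r2 : seq J) (r3 : seq K) (r4 : seq L)
    (F : I -> J -> K -> L -> k) :
  \sum_(i <- r1) \sum_(j <- r2) \sum_(l <- r3) \sum_(m <- r4) F i j l m =
  \sum_(j <- r2) \sum_(l <- r3) \sum_(m <- r4) \sum_(i <- r1) F i j l m.
Proof.
by rewrite exchange_big_rot3; do 2 (apply: eq_bigr => ? _); rewrite exchange_big.
Qed.

Definition sweedler (s : seq (H * H)) (F : H -> H -> k) : k := \sum_(p <- s) F p.1 p.2.

Lemma eq_sweedler s F G : (forall u v, F u v = G u v) -> sweedler s F = sweedler s G.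
Proof. by move=> eFG; apply: eq_bigr => p _; rewrite eFG. Qed.

Lemma sweedler_exchange s s' (G : H -> H -> H -> H -> k) :
  sweedler s (fun u v => sweedler s' (G u v)) =
  sweedler s' (fun x y => sweedler s (fun u v => G u v x y)).
Proof. exact: exchange_big. Qed.

Lemma mulr_sweedlerr s x F : x * sweedler s F = sweedler s (fun u v => x * F u v).
Proof. exact: mulr_sumr. Qed.

Lemma mulr_sweedlerl s x F : sweedler s F * x = sweedler s (fun u v => F u v * x).
Proof. exact: mulr_suml. Qed.

Lemma scalar_sweedler s (G : H -> H -> H -> k) :
  (forall u v, scalar (fun w => G w u v)) -> scalar (fun w => sweedler s (G w)).
Proof. by move=> GP; apply: scalar_bigsum => p; apply: GP. Qed.

Definition bilinear_form (F : H -> H -> k) :=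
  (forall v, scalar (F^~ v)) /\ (forall u, scalar (F u)).

Definition trilinear_form (F : H -> H -> H -> k) :=
  [/\ forall v w, scalar (fun u => F u v w), forall u w, scalar (fun v => F u v w)
    & forall u v, scalar (F u v)].

Lemma trilinear_form12 F w : trilinear_form F -> bilinear_form (fun u v => F u v w).
Proof. by case=> F1 F2 _; split=> [v|u]; [apply: F1 | apply: F2]. Qed.

Lemma trilinear_form23 F u : trilinear_form F -> bilinear_form (F u).
Proof. by case=> _ F2 F3; split=> [w|v]; [apply: F2 | apply: F3]. Qed.

Lemma bilinear_forml F (T : H -> H) y :
  bilinear_form F -> linear T -> scalar (fun w => F (T w) y).
Proof. by case=> F1 _ TP a u v; rewrite TP F1. Qed.

Lemma bilinear_formr F (T : H -> H) x :
  bilinear_form F -> linear T -> scalar (fun w => F x (T w)).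
Proof. by case=> _ F2 TP a u v; rewrite TP F2. Qed.

End Sweedler.

Lemma fgp_dual_basis (k : comNzRingType) (H : algType k) : fgp H ->
  exists n (b : 'I_n -> H) (c : 'I_n -> {scalar H}), forall x, x = \sum_i c i x *: b i.
Proof.
case=> [[s spanP] projP].
pose comb := fun v : 'rV[k]_(size s) => \sum_i v 0 i *: s`_i.
have combP : linear comb.
  move=> a u v; rewrite /comb scaler_sumr -big_split; apply: eq_bigr => i _.
  by rewrite !mxE scalerDl scalerA.
pose pi : {linear 'rV[k]_(size s) -> H} :=
  HB.pack comb (GRing.isLinear.Build k _ _ *:%R comb combP).
have pi_surj (x : H) : exists v, pi v = idfun x.
  have [a ->] := spanP x; exists (\row_i a i).
  by apply: eq_bigr => i _; rewrite mxE.
have [sec secK] := projP _ _ pi idfun pi_surj.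
have coordP i : scalar (fun x => sec x 0 i) by move=> a u v; rewrite linearP !mxE.
by exists (size s), (nth 0 s), (fun i => as_scalar (coordP i)) => x; rewrite -[LHS]secK.
Qed.

Section DualBasis.
Variables (k : comNzRingType) (H : algType k).
Variables (n : nat) (b : 'I_n -> H) (c : 'I_n -> {scalar H}).
Hypothesis coordK : forall x, x = \sum_i c i x *: b i.

Lemma scalar_coord (phi : H -> k) x : scalar phi -> phi x = \sum_i c i x * phi (b i).
Proof.
move=> phiP; rewrite {1}(coordK x) scalar_fun_sum //.
by apply: eq_bigr => i _; rewrite scalar_funZ.
Qed.

Lemma coord_inj u v : (forall i, c i u = c i v) -> u = v.
Proof. by move=> e; rewrite (coordK u) (coordK v); apply: eq_bigr => i _; rewrite e. Qed.

Lemma bilinear_coord F u v : bilinear_form F ->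
  F u v = \sum_i \sum_j c i u * c j v * F (b i) (b j).
Proof.
case=> F1 F2; rewrite (scalar_coord u (F1 v)); apply: eq_bigr => i _.
by rewrite (scalar_coord v (F2 (b i))) mulr_sumr; apply: eq_bigr => j _; rewrite mulrA.
Qed.

(* A Sweedler sum of a bilinear form only depends on the pairings [pair2 f g s];
   this transports the axioms of [is_hopf], stated on pairings, to all bilinear forms. *)
Lemma sweedler_coord s F : bilinear_form F ->
  sweedler s F = \sum_i \sum_j pair2 (c i) (c j) s * F (b i) (b j).
Proof.
move=> FP; rewrite /sweedler /pair2.
under eq_bigr => p _ do rewrite (bilinear_coord p.1 p.2 FP).
rewrite exchange_big; apply: eq_bigr => i _; rewrite exchange_big.
by apply: eq_bigr => j _; rewrite mulr_suml.
Qed.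

Section SeparableIntegral.
Variable eps : {scalar H}.
Hypotheses (epsM : forall x y, eps (x * y) = eps x * eps y) (eps1 : eps 1 = 1).

(* [t = sum eps(y_i) x_i] is a left and [t' = sum eps(x_i) y_i] a right integral, both
   normalized, so t = t' t = t'. *)
Lemma separable_normalized_integral : separable_alg H ->
  exists t, [/\ forall a, a * t = eps a *: t, forall a, t * a = eps a *: t & eps t = 1].
Proof.
case=> e [e1 eP].
have eP' a (f g : {scalar H}) :
    \sum_(p <- e) f (a * p.1) * g p.2 = \sum_(p <- e) f p.1 * g (p.2 * a).
  by have := eP a f g; rewrite /pair2 !big_map.
pose t := \sum_(p <- e) eps p.2 *: p.1; pose t' := \sum_(p <- e) eps p.1 *: p.2.
have t_left a : a * t = eps a *: t.
  apply: coord_inj => i.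
  transitivity (\sum_(p <- e) c i (a * p.1) * eps p.2).
    rewrite /t mulr_sumr linear_sum; apply: eq_bigr => p _.
    by rewrite -scalerAr linearZ /= mulrC.
  rewrite eP' linearZ /t linear_sum /= mulr_sumr; apply: eq_bigr => p _.
  by rewrite linearZ epsM /=; ring.
have t'_right a : t' * a = eps a *: t'.
  apply: coord_inj => i.
  transitivity (\sum_(p <- e) eps p.1 * c i (p.2 * a)).
    rewrite /t' mulr_suml linear_sum; apply: eq_bigr => p _.
    by rewrite -scalerAl linearZ.
  rewrite -eP' linearZ /t' linear_sum /= mulr_sumr; apply: eq_bigr => p _.
  by rewrite linearZ epsM /=; ring.
have eps_t : eps t = 1.
  rewrite /t linear_sum -eps1 -e1 linear_sum; apply: eq_bigr => p _.
  by rewrite linearZ epsM /= mulrC.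
have eps_t' : eps t' = 1.
  rewrite /t' linear_sum -eps1 -e1 linear_sum; apply: eq_bigr => p _.
  by rewrite linearZ epsM.
have tt' : t = t' by have := t_left t'; rewrite eps_t' scale1r t'_right eps_t scale1r.
by exists t; split=> // a; rewrite tt' t'_right.
Qed.

End SeparableIntegral.

Section Hopf.
Variables (D : H -> seq (H * H)) (eps : {scalar H}) (S : {linear H -> H}).
Hypothesis hopfH : is_hopf D eps S.

Let comul_pair_linear (f g : {scalar H}) (a : k) (x y : H) :
  pair2 f g (D (a *: x + y)) = a * pair2 f g (D x) + pair2 f g (D y).
Proof. by case: hopfH => linD _ _ _ _; apply: linD. Qed.

Let comul_pair_coassoc (f g l : {scalar H}) x :
  \sum_(p <- D x) pair2 f g (D p.1) * l p.2 = \sum_(p <- D x) f p.1 * pair2 g l (D p.2).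
Proof. by case: hopfH => _ coassoc _ _ _; apply: coassoc. Qed.

Let counitl_sum x : \sum_(p <- D x) eps p.1 *: p.2 = x.
Proof. by case: hopfH => _ _ /(_ x) []. Qed.

Let counitr_sum x : \sum_(p <- D x) eps p.2 *: p.1 = x.
Proof. by case: hopfH => _ _ /(_ x) []. Qed.

Let comul_pairM (f g : {scalar H}) (x y : H) :
  pair2 f g (D (x * y)) = \sum_(p <- D x) \sum_(q <- D y) f (p.1 * q.1) * g (p.2 * q.2).
Proof. by case: hopfH => _ _ _ [DM _]; rewrite DM. Qed.

Let comul_pair1 (f g : {scalar H}) : pair2 f g (D 1) = f 1 * g 1.
Proof. by case: hopfH => _ _ _ [_ []]. Qed.

Let counitM (x y : H) : eps (x * y) = eps x * eps y.
Proof. by case: hopfH => _ _ _ [_ [_ []]]. Qed.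

Let counit1 : eps 1 = 1.
Proof. by case: hopfH => _ _ _ [_ [_ []]]. Qed.

Let antipodel_sum x : \sum_(p <- D x) S p.1 * p.2 = eps x *: 1.
Proof. by case: hopfH => _ _ _ _ /(_ x) []. Qed.

Let antipoder_sum x : \sum_(p <- D x) p.1 * S p.2 = eps x *: 1.
Proof. by case: hopfH => _ _ _ _ /(_ x) []. Qed.

Lemma scalar_comul F : bilinear_form F -> scalar (fun x => sweedler (D x) F).
Proof.
move=> FP a x y; rewrite !sweedler_coord // mulr_sumr -big_split; apply: eq_bigr => i _.
rewrite mulr_sumr -big_split; apply: eq_bigr => j _; rewrite comul_pair_linear /=; ring.
Qed.

Lemma scalar_comul_comp F (T : H -> H) :
  bilinear_form F -> linear T -> scalar (fun w => sweedler (D (T w)) F).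
Proof. by move=> FP TP a u v; rewrite TP (scalar_comul FP). Qed.

Lemma comulZ F a u : bilinear_form F -> sweedler (D (a *: u)) F = a * sweedler (D u) F.
Proof. by move=> FP; rewrite (scalar_funZ _ _ (scalar_comul FP)). Qed.

Lemma comul_coassoc F x : trilinear_form F ->
  sweedler (D x) (fun u w => sweedler (D u) (fun a a' => F a a' w)) =
  sweedler (D x) (fun u v => sweedler (D v) (F u)).
Proof.
move=> FP; have [F1 _ F3] := FP.
transitivity (\sum_i \sum_j \sum_l
    (\sum_(p <- D x) pair2 (c i) (c j) (D p.1) * c l p.2) * F (b i) (b j) (b l)).
  rewrite {1}/sweedler.
  under eq_bigr => p _ do rewrite (sweedler_coord _ (trilinear_form12 p.2 FP)).
  rewrite [LHS]exchange_big; apply: eq_bigr => i _.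
  rewrite [LHS]exchange_big; apply: eq_bigr => j _.
  under [LHS]eq_bigr => p _ do rewrite (scalar_coord p.2 (F3 (b i) (b j))) mulr_sumr.
  rewrite [LHS]exchange_big; apply: eq_bigr => l _.
  by rewrite mulr_suml; apply: eq_bigr => p _; rewrite /pair2; ring.
under eq_bigr => i _ do under eq_bigr => j _ do under eq_bigr => l _ do
  rewrite comul_pair_coassoc mulr_suml.
rewrite -[LHS]exchange_big_rot4 {1}/sweedler; apply: eq_bigr => p _.
rewrite (sweedler_coord _ (trilinear_form23 p.1 FP)) [LHS]exchange_big_rot3.
apply: eq_bigr => j _; apply: eq_bigr => l _.
rewrite (scalar_coord p.1 (F1 _ _)) mulr_sumr; apply: eq_bigr => i _ /=; ring.
Qed.

Lemma comul_counitl (G : H -> k) x : scalar G ->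
  sweedler (D x) (fun u v => eps u * G v) = G x.
Proof.
move=> GP; rewrite -{2}(counitl_sum x) scalar_fun_sum //.
by apply: eq_bigr => p _; rewrite scalar_funZ.
Qed.

Lemma comul_counitr (G : H -> k) x : scalar G ->
  sweedler (D x) (fun u v => G u * eps v) = G x.
Proof.
move=> GP; rewrite -{2}(counitr_sum x) scalar_fun_sum //.
by apply: eq_bigr => p _; rewrite scalar_funZ // mulrC.
Qed.

Lemma comul_antipodel (G : H -> k) x : scalar G ->
  sweedler (D x) (fun u v => G (S u * v)) = eps x * G 1.
Proof. by move=> GP; rewrite -scalar_funZ // -antipodel_sum scalar_fun_sum. Qed.

Lemma comul_antipoder (G : H -> k) x : scalar G ->
  sweedler (D x) (fun u v => G (u * S v)) = eps x * G 1.
Proof. by move=> GP; rewrite -scalar_funZ // -antipoder_sum scalar_fun_sum. Qed.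

Lemma comulM F x y : bilinear_form F ->
  sweedler (D (x * y)) F =
  sweedler (D x) (fun a a' => sweedler (D y) (fun d d' => F (a * d) (a' * d'))).
Proof.
move=> FP; rewrite sweedler_coord //.
under eq_bigr => i _ do under eq_bigr => j _ do
  (rewrite comul_pairM mulr_suml; under eq_bigr => p _ do rewrite mulr_suml).
rewrite 2![LHS]exchange_big_rot4 /sweedler; apply: eq_bigr => p _; apply: eq_bigr => q _.
by rewrite (bilinear_coord _ _ FP).
Qed.

Lemma comul1 F : bilinear_form F -> sweedler (D 1) F = F 1 1.
Proof.
move=> FP; rewrite sweedler_coord // (bilinear_coord 1 1 FP).
by do 2 (apply: eq_bigr => ? _); rewrite comul_pair1.
Qed.

Ltac solve_linear :=
  let a := fresh "a" in let u := fresh "u" in let v := fresh "v" in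
  move=> a u v /=;
  repeat first [rewrite linearP | rewrite mulrDr | rewrite mulrDl
               | rewrite -scalerAr | rewrite -scalerAl];
  by [].

Ltac solve_scalar :=
  cbv beta;
  match goal with
  | h : ?P |- ?P => exact h
  | |- bilinear_form _ => split => ?; solve_scalar
  | |- trilinear_form _ => split => ? ?; solve_scalar
  | |- scalar (fun _ => sweedler _ _) =>
      first [ apply: scalar_sweedler => ? ?; solve_scalar
            | apply: scalar_comul_comp; [solve_scalar | solve_linear] ]
  | |- scalar (fun _ => \sum_(_ <- _) _) => apply: scalar_bigsum => ?; solve_scalar
  | |- scalar (fun _ => _ * _) =>
      first [ apply: scalar_mulr; solve_scalar | apply: scalar_mull; solve_scalar
            | solve_scalar_ring ]
  | FP : bilinear_form ?F |- scalar (fun _ => ?F _ _) =>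
      first [ apply: (bilinear_forml _ FP); solve_linear
            | apply: (bilinear_formr _ FP); solve_linear ]
  | GP : scalar ?G |- scalar (fun _ => ?G _) => apply: (scalar_comp GP); solve_linear
  | |- scalar _ => solve_scalar_ring
  end
with solve_scalar_ring :=
  let a := fresh "a" in let u := fresh "u" in let v := fresh "v" in
  move=> a u v; cbv beta;
  repeat first [rewrite linearP | rewrite mulrDr | rewrite mulrDl
               | rewrite -scalerAr | rewrite -scalerAl];
  ring.

Lemma counit_antipode x : eps (S x) = eps x.
Proof.
have := comul_antipodel x (scalarP eps); rewrite counit1 mulr1 => <-.
under eq_sweedler => u v do rewrite counitM.
by rewrite (comul_counitr x (G := fun u => eps (S u))) //; solve_scalar.
Qed.

Lemma comul_antipode_cancel F z : bilinear_form F ->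
  sweedler (D z) (fun m m' => sweedler (D m) (fun m1 m2 =>
    sweedler (D m') (fun n1 n2 => F (m1 * S n2) (m2 * S n1))))
  = eps z * F 1 1.
Proof.
move=> FP.
rewrite (comul_coassoc z
  (F := fun m1 m2 m' => sweedler (D m') (fun n1 n2 => F (m1 * S n2) (m2 * S n1))));
  last solve_scalar.
transitivity (sweedler (D z) (fun m1 q => F (m1 * S q) 1)); last first.
  by rewrite (comul_antipoder z (G := fun w => F w 1)) //; solve_scalar.
apply: eq_sweedler => m1 q.
rewrite -(comul_coassoc q (F := fun m2 n1 n2 => F (m1 * S n2) (m2 * S n1))); last solve_scalar.
transitivity (sweedler (D q) (fun r n2 => eps r * F (m1 * S n2) 1)); last first.
  by rewrite (comul_counitl q (G := fun n2 => F (m1 * S n2) 1)) //; solve_scalar.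
apply: eq_sweedler => r n2.
by rewrite (comul_antipoder r (G := fun w => F (m1 * S n2) w)) //; solve_scalar.
Qed.

(* Delta(S a) = Delta(S a_1) (a_2 S a_5 (x) a_3 S a_4) = Delta(S a_1 a_2) (S a_4 (x) S a_3)
   = S a_2 (x) S a_1. *)
Lemma comul_antipode F a : bilinear_form F ->
  sweedler (D (S a)) F = sweedler (D a) (fun u v => F (S v) (S u)).
Proof.
move=> FP.
rewrite -(comul_counitr a (G := fun u => sweedler (D (S u)) F)); last solve_scalar.
transitivity (sweedler (D a) (fun a1 a2 => sweedler (D a2) (fun m m' =>
  sweedler (D (S a1)) (fun s s' => sweedler (D m) (fun m1 m2 => sweedler (D m') (fun n1 n2 =>
     F (s * (m1 * S n2)) (s' * (m2 * S n1)))))))).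
  apply: eq_sweedler => a1 a2; rewrite mulr_sweedlerl sweedler_exchange.
  apply: eq_sweedler => s s'.
  rewrite (comul_antipode_cancel a2 (F := fun x y => F (s * x) (s' * y))); last solve_scalar.
  by rewrite !mulr1 mulrC.
rewrite -(comul_coassoc a (F := fun a1 m m' => sweedler (D (S a1)) (fun s s' =>
  sweedler (D m) (fun m1 m2 => sweedler (D m') (fun n1 n2 =>
    F (s * (m1 * S n2)) (s' * (m2 * S n1))))))); last solve_scalar.
transitivity (sweedler (D a) (fun p m' =>
  eps p * sweedler (D m') (fun n1 n2 => F (S n2) (S n1)))); last first.
  rewrite (comul_counitl a (G := fun m' => sweedler (D m') (fun n1 n2 => F (S n2) (S n1)))) //.
  solve_scalar.
apply: eq_sweedler => p m'; rewrite mulr_sweedlerr.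
under eq_sweedler => a1 m do
  (under eq_sweedler => s s' do rewrite sweedler_exchange; rewrite sweedler_exchange).
rewrite sweedler_exchange; apply: eq_sweedler => n1 n2.
transitivity (sweedler (D p) (fun a1 m =>
  sweedler (D (S a1 * m)) (fun x y => F (x * S n2) (y * S n1)))).
  apply: eq_sweedler => a1 m; rewrite comulM; last solve_scalar.
  by do 2 (apply: eq_sweedler => ? ?); rewrite !mulrA.
rewrite (comul_antipodel p (G := fun z => sweedler (D z) (fun x y => F (x * S n2) (y * S n1))));
  last solve_scalar.
by rewrite comul1 ?mul1r //; solve_scalar.
Qed.

Lemma comul_mul_antipode (g phi : H -> k) x h : scalar g -> scalar phi ->
  sweedler (D x) (fun u v => g u * phi (v * S h)) =
  sweedler (D h) (fun h1 h2 => sweedler (D (x * S h1)) (fun w1 w2 => g (w1 * h2) * phi w2)).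
Proof.
move=> gP phiP; symmetry.
transitivity (sweedler (D h) (fun h1 h2 => sweedler (D x) (fun x1 x2 =>
  sweedler (D h1) (fun m m' => g (x1 * S m' * h2) * phi (x2 * S m))))).
  apply: eq_sweedler => h1 h2; rewrite comulM; last solve_scalar.
  by apply: eq_sweedler => x1 x2; rewrite comul_antipode; last solve_scalar.
rewrite sweedler_exchange; apply: eq_sweedler => x1 x2.
rewrite (comul_coassoc h (F := fun m m' h2 => g (x1 * S m' * h2) * phi (x2 * S m)));
  last solve_scalar.
transitivity (sweedler (D h) (fun m r => phi (x2 * S m) * eps r * g x1)).
  apply: eq_sweedler => m r.
  under eq_sweedler => u v do rewrite -mulrA.
  rewrite (comul_antipodel r (G := fun w => g (x1 * w) * phi (x2 * S m))); last solve_scalar.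
  by rewrite mulr1; ring.
rewrite -mulr_sweedlerl (comul_counitr h (G := fun m => phi (x2 * S m))); last solve_scalar.
by rewrite mulrC.
Qed.

(* The coordinate expansion [sum_i c_i(w) phi(b_i) = phi(w)] moves the dependence on the
   basis vector [b_i] onto [w2]. *)
Lemma trace_comul_exchange (Z : H -> H) (G : H -> H -> k) : linear Z -> bilinear_form G ->
  \sum_i sweedler (D (b i)) (fun u v => sweedler (D (Z v)) (fun w1 w2 => G u w1 * c i w2)) =
  \sum_l sweedler (D (Z (b l))) (fun w1 w2 => sweedler (D w2) (fun y1 y2 => G y1 w1 * c l y2)).
Proof.
move=> ZP [G1 G2].
have innerP i : bilinear_form (fun u v => sweedler (D (Z v)) (fun w1 w2 => G u w1 * c i w2)).
  split=> [v|u]; first by apply: scalar_sweedler => w1 w2; apply/scalar_mulr/G1.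
  apply: scalar_comul_comp ZP; split=> w; first exact/scalar_mulr/G2.
  exact/scalar_mull/scalarP.
under eq_bigr => i _ do rewrite (sweedler_coord _ (innerP i)).
rewrite [LHS]exchange_big_rot3 exchange_big; apply: eq_bigr => l _.
transitivity (\sum_j sweedler (D (Z (b l))) (fun w1 w2 =>
  G (b j) w1 * pair2 (c j) (c l) (D w2))).
  apply: eq_bigr => j _.
  have pairP : scalar (fun w => pair2 (c j) (c l) (D w)).
    by move=> a u v; apply: (scalar_comul (F := fun u v => c j u * c l v)); solve_scalar.
  under eq_sweedler => w1 w2 do rewrite (scalar_coord w2 pairP) mulr_sumr.
  rewrite /sweedler exchange_big; apply: eq_bigr => i _ /=.
  by rewrite mulr_sumr; apply: eq_bigr => p _; ring.
rewrite /sweedler exchange_big; apply: eq_bigr => q _ /=.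
rewrite /pair2; under eq_bigr => j _ do rewrite mulr_sumr.
rewrite exchange_big; apply: eq_bigr => p _ /=.
by rewrite (scalar_coord p.1 (G1 q.1)) mulr_suml; apply: eq_bigr => j _; ring.
Qed.

Definition traceS2 x := \sum_i c i (x * S (S (b i))).

Lemma scalar_traceS2 : scalar traceS2.
Proof. by rewrite /traceS2; solve_scalar. Qed.

Definition lambda : {scalar H} := as_scalar scalar_traceS2.

Lemma lambda_left_integral_fun (g : H -> k) x : scalar g ->
  sweedler (D x) (fun u v => g u * lambda v) = g 1 * lambda x.
Proof.
move=> gP; rewrite /= /traceS2.
transitivity (\sum_i sweedler (D x) (fun u v => g u * c i (v * S (S (b i))))).
  by rewrite /sweedler; under eq_bigr => p _ do rewrite mulr_sumr; rewrite exchange_big.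
transitivity (\sum_i sweedler (D (b i)) (fun u v =>
  sweedler (D (x * S (S v))) (fun w1 w2 => g (w1 * S u) * c i w2))).
  by apply: eq_bigr => i _; rewrite comul_mul_antipode ?comul_antipode //; solve_scalar.
rewrite (trace_comul_exchange (Z := fun v => x * S (S v)) (G := fun u w1 => g (w1 * S u)));
  [| solve_linear | solve_scalar].
rewrite mulr_sumr; apply: eq_bigr => l _.
rewrite -(comul_coassoc _ (F := fun z1 y1 y2 => g (z1 * S y1) * c l y2)); last solve_scalar.
transitivity (sweedler (D (x * S (S (b l)))) (fun q y2 => eps q * (g 1 * c l y2))).
  apply: eq_sweedler => q y2.
  by rewrite (comul_antipoder q (G := fun w => g w * c l y2)); last solve_scalar.
by rewrite (comul_counitl _ (G := fun y2 => g 1 * c l y2)) //; solve_scalar.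
Qed.

Lemma lambda_left_integral : left_integral D lambda.
Proof. by move=> g h; apply: lambda_left_integral_fun; apply: scalarP. Qed.

Section NormalizedIntegral.
Variable t : H.
Hypotheses (t_left : forall a, a * t = eps a *: t) (t_right : forall a, t * a = eps a *: t).
Hypothesis counit_t : eps t = 1.

Lemma integral_comul_mull F a : bilinear_form F ->
  sweedler (D t) (fun u v => F u (a * v)) = sweedler (D t) (fun u v => F (S a * u) v).
Proof.
move=> FP.
rewrite -(comul_counitl a (G := fun w => sweedler (D t) (fun u v => F u (w * v))));
  last solve_scalar.
transitivity (sweedler (D a) (fun a1 a2 => sweedler (D a1) (fun m m' =>
  sweedler (D t) (fun u v => F (S m * m' * u) (a2 * v))))).
  apply: eq_sweedler => a1 a2.
  rewrite (comul_antipodel a1 (G := fun w => sweedler (D t) (fun u v => F (w * u) (a2 * v))));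
    last solve_scalar.
  by congr (_ * _); apply: eq_sweedler => u v; rewrite mul1r.
rewrite (comul_coassoc a (F := fun m m' a2 =>
  sweedler (D t) (fun u v => F (S m * m' * u) (a2 * v)))); last solve_scalar.
transitivity (sweedler (D a) (fun m r => sweedler (D t) (fun u v => F (S m * u) v) * eps r));
  last by rewrite (comul_counitr a (G := fun m => sweedler (D t) (fun u v => F (S m * u) v)));
    last solve_scalar.
apply: eq_sweedler => m r.
transitivity (sweedler (D (r * t)) (fun u v => F (S m * u) v)).
  rewrite comulM; last solve_scalar.
  by apply: eq_sweedler => m' a2; apply: eq_sweedler => u v; rewrite mulrA.
by rewrite t_left comulZ; [rewrite mulrC | solve_scalar].
Qed.

Lemma integral_comul_mulr F a : bilinear_form F ->
  sweedler (D t) (fun u v => F (u * a) v) = sweedler (D t) (fun u v => F u (v * S a)).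
Proof.
move=> FP.
rewrite -(comul_counitr a (G := fun w => sweedler (D t) (fun u v => F (u * w) v)));
  last solve_scalar.
transitivity (sweedler (D a) (fun a1 a2 => sweedler (D a2) (fun m m' =>
  sweedler (D t) (fun u v => F (u * a1) (v * (m * S m')))))).
  apply: eq_sweedler => a1 a2.
  rewrite (comul_antipoder a2 (G := fun w => sweedler (D t) (fun u v => F (u * a1) (v * w))));
    last solve_scalar.
  by rewrite mulrC; congr (_ * _); apply: eq_sweedler => u v; rewrite mulr1.
rewrite -(comul_coassoc a (F := fun a1 m m' =>
  sweedler (D t) (fun u v => F (u * a1) (v * (m * S m'))))); last solve_scalar.
transitivity (sweedler (D a) (fun p m' => eps p * sweedler (D t) (fun u v => F u (v * S m'))));
  last by rewrite (comul_counitl a (G := fun m' => sweedler (D t) (fun u v => F u (v * S m'))));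
    last solve_scalar.
apply: eq_sweedler => p m'.
transitivity (sweedler (D (t * p)) (fun u v => F u (v * S m'))).
  rewrite comulM; last solve_scalar.
  rewrite sweedler_exchange; apply: eq_sweedler => a1 m.
  by apply: eq_sweedler => u v; rewrite mulrA.
by rewrite t_right comulZ //; solve_scalar.
Qed.

Lemma lambda_integral : lambda t = 1.
Proof.
rewrite /= /traceS2 -counit_t (scalar_coord t (scalarP eps)); apply: eq_bigr => i _.
by rewrite t_right linearZ /= !counit_antipode mulrC.
Qed.

Lemma integral_antipode_lambda_mulr (f : H -> k) y : scalar f ->
  sweedler (D t) (fun u v => f (S u) * lambda (v * y)) = f y.
Proof.
move=> fP.
transitivity (sweedler (D t) (fun u v => sweedler (D v) (fun a a' =>
  sweedler (D y) (fun d d' => f (S u * (a * d)) * lambda (a' * d'))))).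
  apply: eq_sweedler => u v.
  have fSuP : scalar (fun w => f (S u * w)) by solve_scalar.
  rewrite -{1}[S u]mulr1 -(lambda_left_integral_fun (v * y) fSuP) comulM //; solve_scalar.
rewrite -(comul_coassoc t (F := fun u a a' =>
  sweedler (D y) (fun d d' => f (S u * (a * d)) * lambda (a' * d')))); last solve_scalar.
transitivity (sweedler (D t) (fun p a' =>
  eps p * sweedler (D y) (fun d d' => f d * lambda (a' * d')))).
  apply: eq_sweedler => p a'.
  under eq_sweedler => u a do under eq_sweedler => d d' do rewrite mulrA.
  rewrite (comul_antipodel p (G := fun w =>
    sweedler (D y) (fun d d' => f (w * d) * lambda (a' * d')))); last solve_scalar.
  by congr (_ * _); apply: eq_sweedler => d d'; rewrite mul1r.
rewrite (comul_counitl t (G := fun a' => sweedler (D y) (fun d d' => f d * lambda (a' * d'))));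
  last solve_scalar.
rewrite -[RHS](comul_counitr y fP); apply: eq_sweedler => d d'.
by rewrite t_right linearZ lambda_integral /= mulr1.
Qed.

Lemma integral_lambda_mulr_antipode (f : H -> k) a : scalar f ->
  sweedler (D t) (fun u v => f u * lambda (v * S a)) = f a.
Proof.
move=> fP; rewrite -(integral_comul_mulr a (F := fun u v => f u * lambda v)); last solve_scalar.
have faP : scalar (fun w => f (w * a)) by solve_scalar.
by rewrite (lambda_left_integral_fun t faP) lambda_integral mul1r mulr1.
Qed.

Lemma integral_lambda_mull (f : H -> k) x : scalar f ->
  sweedler (D t) (fun u v => f u * lambda (x * v)) = f (S x).
Proof.
move=> fP; rewrite (integral_comul_mull x (F := fun u v => f u * lambda v)); last solve_scalar.
have fSxP : scalar (fun w => f (S x * w)) by solve_scalar.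
by rewrite (lambda_left_integral_fun t fSxP) lambda_integral !mulr1.
Qed.

Lemma lambda_frobenius : frobenius_hom lambda.
Proof.
split=> [x x' eqx | g].
  apply: coord_inj => i.
  pose g' w := sweedler (D t) (fun u v => c i u * lambda (v * w)).
  have g'P : scalar g' by rewrite /g'; solve_scalar.
  have coord_lambda z : c i z = lambda (z * \sum_(p <- D t) g' p.1 *: p.2).
    rewrite -(integral_lambda_mulr_antipode z (scalarP (c i))) -/(g' (S z)).
    rewrite -(integral_lambda_mull z g'P) mulr_sumr linear_sum; apply: eq_bigr => p _.
    by rewrite -scalerAr linearZ.
  by rewrite !coord_lambda eqx.
exists (\sum_(p <- D t) g (S p.1) *: p.2) => y.
rewrite -(integral_antipode_lambda_mulr y (scalarP g)) mulr_suml linear_sum.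
by apply: eq_bigr => p _; rewrite -scalerAl linearZ.
Qed.

End NormalizedIntegral.
End Hopf.
End DualBasis.

Unset Implicit Arguments.
Theorem corollary6p3 (k : comNzRingType) (H : algType k)
    (comul : H -> seq (H * H)) (counit : {scalar H}) (antipode : {linear H -> H}) :
  is_hopf comul counit antipode -> fgp H -> separable_alg H -> FH_alg comul.
Proof.
move=> hopfH fgpH sepH.
have [n [b [c coordK]]] := fgp_dual_basis fgpH.
have [_ _ _ [_ [_ [counitM counit1]]] _] := hopfH.
have [t [t_left t_right counit_t]] :=
  separable_normalized_integral coordK counitM counit1 sepH.
have frobH := lambda_frobenius coordK hopfH t_left t_right counit_t.
have integralH := lambda_left_integral coordK hopfH.
split; first by split=> //; exists (lambda b c antipode).
by exists (lambda b c antipode).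
Qed.
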